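(* In the setting below, the assignment $\square$ on corelations preserves composition: for corelations $f\colon X\to Y$ and $g\colon Y\to Z$ in $\mathrm{Corel}_{(\mathcal E,\mathcal M)}(\mathcal C)$, $\square(g\circ f)=\square(g)\circ\square(f)$ as morphisms of $\mathrm{Corel}_{(\mathcal E',\mathcal M')}(\mathcal C')$ (i.e. up to isomorphism of cospans).
   Context: $\mathcal C,\mathcal C'$ are categories with finite colimits with costable factorisation systems $(\mathcal E,\mathcal M)$, $(\mathcal E',\mathcal M')$ (factorisation systems whose right class is stable under pushout). $A\colon\mathcal C\to\mathcal C'$ preserves finite colimits and $A(\mathcal M)\subseteq\mathcal M'$. An $(\mathcal E,\mathcal M)$-corelation is a cospan $X\xrightarrow{i}N\xleftarrow{o}Y$ with $[i,o]\in\mathcal E$, up to isomorphism; the $\mathcal E$-part of an arbitrary cospan is obtained by factoring $[i,o]=m\circ e$ ($e\colon X+Y\to\overline N\in\mathcal E$, $m\in\mathcal M$) and taking $X\xrightarrow{e\iota_X}\overline N\xleftarrow{e\iota_Y}Y$; corelations compose by taking the $\mathcal E$-part of the pushout composite cospan. The map $\square$ sends an $(\mathcal E,\mathcal M)$-corelation $X\xrightarrow{i}N\xleftarrow{o}Y$ to the $\mathcal E'$-part of the cospan $AX\xrightarrow{Ai}AN\xleftarrow{Ao}AY$. *)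

Set Implicit Arguments.
Unset Strict Implicit.

Record Category := {
  ob :> Type;
  hom : ob -> ob -> Type;
  idm : forall a, hom a a;
  comp : forall a b c, hom b c -> hom a b -> hom a c;
  comp_idl : forall a b (f : hom a b), comp (idm b) f = f;
  comp_idr : forall a b (f : hom a b), comp f (idm a) = f;
  comp_assoc : forall a b c d (f : hom a b) (g : hom b c) (h : hom c d),
      comp h (comp g f) = comp (comp h g) f
}.
Arguments idm {C} a : rename.
Arguments comp {C a b c} g f : rename.
Arguments hom {C} a b : rename.
Notation "g ⊚ f" := (comp g f) (at level 40, left associativity).

Definition is_iso (C : Category) (a b : C) (f : hom a b) : Prop :=
  exists g : hom b a, g ⊚ f = idm a /\ f ⊚ g = idm b.

Definition is_initial (C : Category) (z : C) : Prop :=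
  forall c : C, exists! h : hom z c, True.

Definition is_coproduct (C : Category) (a b s : C)
  (i1 : hom a s) (i2 : hom b s) : Prop :=
  forall c (f : hom a c) (g : hom b c),
    exists! h : hom s c, h ⊚ i1 = f /\ h ⊚ i2 = g.

Definition is_pushout (C : Category) (a b c p : C)
  (f : hom a b) (g : hom a c) (j : hom b p) (k : hom c p) : Prop :=
  j ⊚ f = k ⊚ g /\
  forall q (u : hom b q) (v : hom c q), u ⊚ f = v ⊚ g ->
    exists! h : hom p q, h ⊚ j = u /\ h ⊚ k = v.

(* A category with finite colimits, with chosen initial object,
   binary coproducts and pushouts (these generate all finite colimits). *)
Record FinColim (C : Category) := {
  initial : C;
  initial_is : is_initial initial;
  coprod : C -> C -> C;
  inj1 : forall a b, hom a (coprod a b);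
  inj2 : forall a b, hom b (coprod a b);
  copair : forall a b c, hom a c -> hom b c -> hom (coprod a b) c;
  copair_inj1 : forall a b c (f : hom a c) (g : hom b c), copair f g ⊚ inj1 a b = f;
  copair_inj2 : forall a b c (f : hom a c) (g : hom b c), copair f g ⊚ inj2 a b = g;
  copair_uniq : forall a b c (h : hom (coprod a b) c),
      h = copair (h ⊚ inj1 a b) (h ⊚ inj2 a b);
  po_obj : forall a b c, hom a b -> hom a c -> C;
  po_l : forall a b c (f : hom a b) (g : hom a c), hom b (po_obj f g);
  po_r : forall a b c (f : hom a b) (g : hom a c), hom c (po_obj f g);
  po_is : forall a b c (f : hom a b) (g : hom a c),
      is_pushout f g (po_l f g) (po_r f g)
}.
Arguments copair {C} _ {a b c} f g.
Arguments inj1 {C} _ a b.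
Arguments inj2 {C} _ a b.
Arguments coprod {C} _ a b.
Arguments po_obj {C} _ {a b c} f g.
Arguments po_l {C} _ {a b c} f g.
Arguments po_r {C} _ {a b c} f g.

Record FactSys (C : Category) := {
  E : forall a b : C, hom a b -> Prop;
  M : forall a b : C, hom a b -> Prop;
  E_iso : forall a b (f : hom a b), is_iso f -> E f;
  M_iso : forall a b (f : hom a b), is_iso f -> M f;
  E_comp : forall a b c (f : hom a b) (g : hom b c), E f -> E g -> E (g ⊚ f);
  M_comp : forall a b c (f : hom a b) (g : hom b c), M f -> M g -> M (g ⊚ f);
  fact_obj : forall a b : C, hom a b -> C;
  fact_e : forall a b (f : hom a b), hom a (fact_obj f);
  fact_m : forall a b (f : hom a b), hom (fact_obj f) b;
  fact_e_E : forall a b (f : hom a b), E (fact_e f);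
  fact_m_M : forall a b (f : hom a b), M (fact_m f);
  fact_eq : forall a b (f : hom a b), fact_m f ⊚ fact_e f = f;
  fact_diag : forall a b a' b' (f : hom a b) (f' : hom a' b')
      x (e : hom a x) (m : hom x b) x' (e' : hom a' x') (m' : hom x' b')
      (u : hom a a') (v : hom b b'),
      E e -> M m -> m ⊚ e = f -> E e' -> M m' -> m' ⊚ e' = f' ->
      v ⊚ f = f' ⊚ u ->
      exists! s : hom x x', s ⊚ e = e' ⊚ u /\ m' ⊚ s = v ⊚ m
}.
Arguments E {C} _ {a b} f.
Arguments M {C} _ {a b} f.
Arguments fact_obj {C} _ {a b} f.
Arguments fact_e {C} _ {a b} f.
Arguments fact_m {C} _ {a b} f.

Definition costable (C : Category) (F : FactSys C) : Prop :=
  forall (a b c p : C) (m : hom a b) (g : hom a c) (j : hom b p) (k : hom c p),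
    M F m -> is_pushout m g j k -> M F k.

Record Functor (C D : Category) := {
  fob :> C -> D;
  fhom : forall a b : C, hom a b -> hom (fob a) (fob b);
  fhom_id : forall a, fhom (idm a) = idm (fob a);
  fhom_comp : forall a b c (f : hom a b) (g : hom b c),
      fhom (g ⊚ f) = fhom g ⊚ fhom f
}.
Arguments fhom {C D} _ {a b} f.

(* preservation of finite colimits (initial object, binary coproducts,
   pushouts; these generate all finite colimits) *)
Definition preserves_finite_colimits (C D : Category) (A : Functor C D) : Prop :=
  (forall z : C, is_initial z -> is_initial (A z)) /\
  (forall (a b s : C) (i1 : hom a s) (i2 : hom b s),
      is_coproduct i1 i2 -> is_coproduct (fhom A i1) (fhom A i2)) /\
  (forall (a b c p : C) (f : hom a b) (g : hom a c) (j : hom b p) (k : hom c p),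
      is_pushout f g j k -> is_pushout (fhom A f) (fhom A g) (fhom A j) (fhom A k)).

Record cospan (C : Category) (X Y : C) := {
  apex : C;
  leg_l : hom X apex;
  leg_r : hom Y apex
}.
Arguments apex {C X Y} c.
Arguments leg_l {C X Y} c.
Arguments leg_r {C X Y} c.

Definition cospan_iso (C : Category) (X Y : C) (c d : cospan X Y) : Prop :=
  exists phi : hom (apex c) (apex d),
    is_iso phi /\ phi ⊚ leg_l c = leg_l d /\ phi ⊚ leg_r c = leg_r d.

Section Corel.
Variables (C : Category) (K : FinColim C) (F : FactSys C).

Definition is_corel (X Y : C) (c : cospan X Y) : Prop :=
  E F (copair K (leg_l c) (leg_r c)).

Definition epart (X Y : C) (c : cospan X Y) : cospan X Y :=
  let e := fact_e F (copair K (leg_l c) (leg_r c)) in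
  {| apex := _; leg_l := e ⊚ inj1 K X Y; leg_r := e ⊚ inj2 K X Y |}.

Definition cospan_comp (X Y Z : C) (f : cospan X Y) (g : cospan Y Z) : cospan X Z :=
  {| apex := po_obj K (leg_r f) (leg_l g);
     leg_l := po_l K (leg_r f) (leg_l g) ⊚ leg_l f;
     leg_r := po_r K (leg_r f) (leg_l g) ⊚ leg_r g |}.

Definition corel_comp (X Y Z : C) (g : cospan Y Z) (f : cospan X Y) : cospan X Z :=
  epart (cospan_comp f g).
End Corel.

Definition cospan_map (C D : Category) (A : Functor C D) (X Y : C) (c : cospan X Y)
  : cospan (A X) (A Y) :=
  {| apex := A (apex c); leg_l := fhom A (leg_l c); leg_r := fhom A (leg_r c) |}.

Definition box (C D : Category) (K' : FinColim D) (F' : FactSys D)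
  (A : Functor C D) (X Y : C) (c : cospan X Y) : cospan (A X) (A Y) :=
  epart K' F' (cospan_map A c).

(* The E-part of a cospan is invariant under maps of cospans lying in M: if
   [mu] in M commutes with the legs of [d] and [c], then [e_d] and [e_c] are the
   E-parts of two (E,M)-factorisations of the same copairing, hence isomorphic.
   Both sides are thus isomorphic to the E'-part of the image of the pushout
   composite: on the left because [A] sends the M-part of a factorisation into M';
   on the right because [A] preserves pushouts and because replacing the cospans
   of a pushout composite by their E'-parts changes the pushout by a map that is
   itself a pushout of an M'-map, hence in M' by costability. *)
Set Implicit Arguments.
Unset Strict Implicit.

Lemma unique_exists_eq (T : Type) (P : T -> Prop) (a b : T) :
  (exists! x, P x) -> P a -> P b -> a = b.
Proof.
  intros [x [_ Hx]] Ha Hb.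
  rewrite <- (Hx a Ha), <- (Hx b Hb). reflexivity.
Qed.

Lemma cospan_iso_sym (C : Category) (X Y : C) (c d : cospan X Y) :
  cospan_iso c d -> cospan_iso d c.
Proof.
  intros [phi [[psi [H1 H2]] [Hl Hr]]].
  exists psi. split; [exists phi; split; assumption|split].
  - rewrite <- Hl, comp_assoc, H1, comp_idl. reflexivity.
  - rewrite <- Hr, comp_assoc, H1, comp_idl. reflexivity.
Qed.

Lemma cospan_iso_trans (C : Category) (X Y : C) (c d e : cospan X Y) :
  cospan_iso c d -> cospan_iso d e -> cospan_iso c e.
Proof.
  intros [phi [[psi [H1 H2]] [Hl Hr]]] [phi' [[psi' [H1' H2']] [Hl' Hr']]].
  exists (phi' ⊚ phi). split; [exists (psi ⊚ psi'); split|split].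
  - rewrite !comp_assoc, <- (comp_assoc phi' psi' psi), H1', comp_idr. exact H1.
  - rewrite !comp_assoc, <- (comp_assoc psi phi phi'), H2, comp_idr. exact H2'.
  - rewrite <- comp_assoc, Hl. exact Hl'.
  - rewrite <- comp_assoc, Hr. exact Hr'.
Qed.

Section Pushouts.
Variable C : Category.

Lemma pushout_hom_ext (a b c p q : C) (f : hom a b) (g : hom a c)
    (j : hom b p) (k : hom c p) (h h' : hom p q) :
  is_pushout f g j k -> h ⊚ j = h' ⊚ j -> h ⊚ k = h' ⊚ k -> h = h'.
Proof.
  intros [Hsq Hu] Hj Hk.
  destruct (Hu q (h ⊚ j) (h ⊚ k)) as [x [_ Hx]].
  { rewrite <- !comp_assoc, Hsq. reflexivity. }
  rewrite <- (Hx h), <- (Hx h'); auto.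
Qed.

Lemma pushout_sym (a b c p : C) (f : hom a b) (g : hom a c)
    (j : hom b p) (k : hom c p) :
  is_pushout f g j k -> is_pushout g f k j.
Proof.
  intros [Hsq Hu]. split; [symmetry; exact Hsq|].
  intros q u v Huv.
  destruct (Hu q v u (eq_sym Huv)) as [h [[H1 H2] Hh]].
  exists h. split; [split; assumption|].
  intros h' [H1' H2']. apply Hh. split; assumption.
Qed.

Lemma pushout_unique_iso (a b c p p' : C) (f : hom a b) (g : hom a c)
    (j : hom b p) (k : hom c p) (j' : hom b p') (k' : hom c p') :
  is_pushout f g j k -> is_pushout f g j' k' ->
  exists phi : hom p p', is_iso phi /\ phi ⊚ j = j' /\ phi ⊚ k = k'.
Proof.
  intros H H'. pose proof H as [sq U]. pose proof H' as [sq' U'].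
  destruct (U _ j' k' sq') as [phi [[P1 P2] _]].
  destruct (U' _ j k sq) as [psi [[Q1 Q2] _]].
  exists phi. split; [exists psi; split|split; assumption].
  - apply (pushout_hom_ext H); rewrite comp_idl, <- comp_assoc.
    + rewrite P1, Q1. reflexivity.
    + rewrite P2, Q2. reflexivity.
  - apply (pushout_hom_ext H'); rewrite comp_idl, <- comp_assoc.
    + rewrite Q1, P1. reflexivity.
    + rewrite Q2, P2. reflexivity.
Qed.

Lemma pushout_paste_right (a b c d p p' : C) (f : hom a b) (g : hom a c)
    (j : hom b p) (k : hom c p) (m : hom b d) (j' : hom d p') (k' : hom c p')
    (mu : hom p p') :
  is_pushout f g j k -> is_pushout (m ⊚ f) g j' k' ->
  mu ⊚ j = j' ⊚ m -> mu ⊚ k = k' -> is_pushout m j j' mu.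
Proof.
  intros HP [sq' U'] Hj Hk. split; [symmetry; exact Hj|].
  intros q u v Huv.
  destruct (U' q u (v ⊚ k)) as [h [[H1 H2] Hh]].
  { destruct HP as [sq _].
    rewrite comp_assoc, Huv, <- comp_assoc, sq, comp_assoc. reflexivity. }
  assert (Hmu : h ⊚ mu = v).
  { apply (pushout_hom_ext HP); rewrite <- comp_assoc.
    - rewrite Hj, comp_assoc, H1. exact Huv.
    - rewrite Hk. exact H2. }
  exists h. split; [split; assumption|].
  intros h' [H1' H2']. apply Hh. split; [exact H1'|].
  rewrite <- H2', <- comp_assoc, Hk. reflexivity.
Qed.

Variable F : FactSys C.
Hypothesis hF : costable F.

Lemma pushout_comparison_M (a b c d p p' : C) (f : hom a b) (g : hom a c)
    (j : hom b p) (k : hom c p) (m : hom b d) (j' : hom d p') (k' : hom c p') :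
  M F m -> is_pushout f g j k -> is_pushout (m ⊚ f) g j' k' ->
  exists mu : hom p p', M F mu /\ mu ⊚ j = j' ⊚ m /\ mu ⊚ k = k'.
Proof.
  intros Hm HP HP'. pose proof HP as [sq U]. pose proof HP' as [sq' _].
  destruct (U _ (j' ⊚ m) k') as [mu [[Hj Hk] _]].
  { rewrite <- comp_assoc. exact sq'. }
  exists mu. split; [|split; assumption].
  exact (hF Hm (pushout_paste_right HP HP' Hj Hk)).
Qed.

Variable K : FinColim C.

(* Change one leg at a time. *)
Lemma po_comparison_M (y nf' nf ng' ng : C) (r' : hom y nf') (l' : hom y ng')
    (mf : hom nf' nf) (mg : hom ng' ng) (r : hom y nf) (l : hom y ng) :
  M F mf -> M F mg -> mf ⊚ r' = r -> mg ⊚ l' = l ->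
  exists mu : hom (po_obj K r' l') (po_obj K r l),
    M F mu /\ mu ⊚ po_l K r' l' = po_l K r l ⊚ mf
           /\ mu ⊚ po_r K r' l' = po_r K r l ⊚ mg.
Proof.
  intros Mf Mg Hr Hl. subst r l.
  destruct (pushout_comparison_M Mf (po_is K r' l') (po_is K (mf ⊚ r') l'))
    as [mu1 [M1 [H11 H12]]].
  destruct (pushout_comparison_M Mg (pushout_sym (po_is K (mf ⊚ r') l'))
              (pushout_sym (po_is K (mf ⊚ r') (mg ⊚ l')))) as [mu2 [M2 [H22 H21]]].
  exists (mu2 ⊚ mu1). split; [apply M_comp; assumption|split].
  - rewrite <- comp_assoc, H11, comp_assoc, H21. reflexivity.
  - rewrite <- comp_assoc, H12. exact H22.
Qed.

End Pushouts.

Lemma comp_copair (C : Category) (K : FinColim C) (X Y Q Q' : C)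
    (l : hom X Q) (r : hom Y Q) (mu : hom Q Q') :
  mu ⊚ copair K l r = copair K (mu ⊚ l) (mu ⊚ r).
Proof.
  rewrite (copair_uniq (mu ⊚ copair K l r)).
  rewrite <- !comp_assoc, copair_inj1, copair_inj2. reflexivity.
Qed.

Section Factorisations.
Variables (C : Category) (F : FactSys C).

Lemma factorisation_diag (a b x x' : C) (f : hom a b)
    (e : hom a x) (m : hom x b) (e' : hom a x') (m' : hom x' b) :
  E F e -> M F m -> m ⊚ e = f -> E F e' -> M F m' -> m' ⊚ e' = f ->
  exists! s : hom x x', s ⊚ e = e' /\ m' ⊚ s = m.
Proof.
  intros He Hm Hf He' Hm' Hf'.
  destruct (fact_diag He Hm Hf He' Hm' Hf' (u := idm a) (v := idm b))
    as [s [[H1 H2] Hs]].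
  { rewrite comp_idl, comp_idr. reflexivity. }
  rewrite comp_idr in H1. rewrite comp_idl in H2.
  exists s. split; [split; assumption|].
  intros t [Ht1 Ht2]. apply Hs. rewrite comp_idr, comp_idl. split; assumption.
Qed.

Lemma factorisation_unique (a b x x' : C) (f : hom a b)
    (e : hom a x) (m : hom x b) (e' : hom a x') (m' : hom x' b) :
  E F e -> M F m -> m ⊚ e = f -> E F e' -> M F m' -> m' ⊚ e' = f ->
  exists s : hom x x', is_iso s /\ s ⊚ e = e'.
Proof.
  intros He Hm Hf He' Hm' Hf'.
  destruct (factorisation_diag He Hm Hf He' Hm' Hf') as [s [[Hs1 Hs2] _]].
  destruct (factorisation_diag He' Hm' Hf' He Hm Hf) as [t [[Ht1 Ht2] _]].
  exists s. split; [exists t; split|exact Hs1].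
  - apply (unique_exists_eq (factorisation_diag He Hm Hf He Hm Hf)); split.
    + rewrite <- comp_assoc, Hs1. exact Ht1.
    + rewrite comp_assoc, Ht2. exact Hs2.
    + apply comp_idl.
    + apply comp_idr.
  - apply (unique_exists_eq (factorisation_diag He' Hm' Hf' He' Hm' Hf')); split.
    + rewrite <- comp_assoc, Ht1. exact Hs1.
    + rewrite comp_assoc, Hs2. exact Ht2.
    + apply comp_idl.
    + apply comp_idr.
Qed.

Variable K : FinColim C.

Lemma fact_m_epart_leg_l (X Y : C) (c : cospan X Y) :
  fact_m F (copair K (leg_l c) (leg_r c)) ⊚ leg_l (epart K F c) = leg_l c.
Proof. simpl. rewrite comp_assoc, fact_eq, copair_inj1. reflexivity. Qed.

Lemma fact_m_epart_leg_r (X Y : C) (c : cospan X Y) :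
  fact_m F (copair K (leg_l c) (leg_r c)) ⊚ leg_r (epart K F c) = leg_r c.
Proof. simpl. rewrite comp_assoc, fact_eq, copair_inj2. reflexivity. Qed.

Lemma epart_M_morphism (X Y : C) (c d : cospan X Y) (mu : hom (apex d) (apex c)) :
  M F mu -> mu ⊚ leg_l d = leg_l c -> mu ⊚ leg_r d = leg_r c ->
  cospan_iso (epart K F d) (epart K F c).
Proof.
  intros HM Hl Hr.
  set (cd := copair K (leg_l d) (leg_r d)).
  set (cc := copair K (leg_l c) (leg_r c)).
  assert (Hcd : (mu ⊚ fact_m F cd) ⊚ fact_e F cd = cc).
  { rewrite <- comp_assoc, fact_eq. unfold cd, cc.
    rewrite comp_copair, Hl, Hr. reflexivity. }
  destruct (factorisation_unique (fact_e_E F cd) (M_comp (fact_m_M F cd) HM) Hcd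
              (fact_e_E F cc) (fact_m_M F cc) (fact_eq F cc)) as [s [Hs He]].
  exists s. split; [exact Hs|].
  simpl. fold cd cc. rewrite !comp_assoc, He. split; reflexivity.
Qed.

Lemma epart_cospan_iso (X Y : C) (c d : cospan X Y) :
  cospan_iso c d -> cospan_iso (epart K F c) (epart K F d).
Proof.
  intros [phi [Hphi [Hl Hr]]].
  exact (epart_M_morphism (M_iso F Hphi) Hl Hr).
Qed.

Lemma epart_cospan_comp_epart (hF : costable F) (X Y Z : C)
    (f : cospan X Y) (g : cospan Y Z) :
  cospan_iso (epart K F (cospan_comp K (epart K F f) (epart K F g)))
             (epart K F (cospan_comp K f g)).
Proof.
  destruct (po_comparison_M hF K (fact_m_M F _) (fact_m_M F _)
              (fact_m_epart_leg_r f) (fact_m_epart_leg_l g)) as [mu [Hmu [H1 H2]]].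
  apply (epart_M_morphism (c := cospan_comp K f g)
           (d := cospan_comp K (epart K F f) (epart K F g)) Hmu);
    cbn [cospan_comp leg_l leg_r]; rewrite comp_assoc.

  - refine (eq_trans (f_equal (fun h => h ⊚ _) H1) _).
    rewrite <- comp_assoc. f_equal. apply fact_m_epart_leg_l.
  - refine (eq_trans (f_equal (fun h => h ⊚ _) H2) _).
    rewrite <- comp_assoc. f_equal. apply fact_m_epart_leg_r.
Qed.

End Factorisations.

Section Image.
Variables (C C' : Category) (K : FinColim C) (K' : FinColim C')
  (F : FactSys C) (F' : FactSys C') (A : Functor C C').

Lemma epart_map_epart
    (hAM : forall (a b : C) (m : hom a b), M F m -> M F' (fhom A m))
    (X Y : C) (c : cospan X Y) :
  cospan_iso (epart K' F' (cospan_map A (epart K F c)))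
             (epart K' F' (cospan_map A c)).
Proof.
  apply (epart_M_morphism K' (c := cospan_map A c) (d := cospan_map A (epart K F c))
           (mu := fhom A (fact_m F (copair K (leg_l c) (leg_r c)))));
    [apply hAM, fact_m_M| |]; cbn [cospan_map leg_l leg_r apex];
    rewrite <- fhom_comp; f_equal.
  - apply fact_m_epart_leg_l.
  - apply fact_m_epart_leg_r.
Qed.

Lemma cospan_comp_map
    (hA : forall (a b c p : C) (f : hom a b) (g : hom a c) (j : hom b p) (k : hom c p),
        is_pushout f g j k -> is_pushout (fhom A f) (fhom A g) (fhom A j) (fhom A k))
    (X Y Z : C) (f : cospan X Y) (g : cospan Y Z) :
  cospan_iso (cospan_comp K' (cospan_map A f) (cospan_map A g))
             (cospan_map A (cospan_comp K f g)).
Proof.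
  destruct (pushout_unique_iso (po_is K' (fhom A (leg_r f)) (fhom A (leg_l g)))
              (hA _ _ _ _ _ _ _ _ (po_is K (leg_r f) (leg_l g)))) as [phi [Hphi [P1 P2]]].
  exists phi. split; [exact Hphi|]. simpl.
  rewrite !comp_assoc, P1, P2, !fhom_comp. split; reflexivity.
Qed.

End Image.

Theorem mainTheorem5 (C C' : Category) (K : FinColim C) (K' : FinColim C')
  (F : FactSys C) (F' : FactSys C')
  (hF : costable F) (hF' : costable F')
  (A : Functor C C') (hA : preserves_finite_colimits A)
  (hAM : forall (a b : C) (m : hom a b), M F m -> M F' (fhom A m))
  (X Y Z : C) (f : cospan X Y) (g : cospan Y Z)
  (hf : is_corel K F f) (hg : is_corel K F g) :
  cospan_iso (box K' F' A (corel_comp K F g f))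
             (corel_comp K' F' (box K' F' A g) (box K' F' A f)).
Proof.
  unfold box, corel_comp.
  eapply cospan_iso_trans; [apply (epart_map_epart K K' hAM)|].
  eapply cospan_iso_trans.
  - apply cospan_iso_sym, epart_cospan_iso, (cospan_comp_map K K' (proj2 (proj2 hA))).
  - apply cospan_iso_sym, (epart_cospan_comp_epart K' hF').
Qed.
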